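(* Let $F^*$ be the set of activated blue edges of an optimal solution of an instance of $\mathsf{StackMST}(\gamma,\Delta)$ with red tree $T$ of height $h$ rooted at its center $v_0$, and let $r(F^* )$ be its (optimal) revenue. Then $$r(F^* )\le c(T)-\sum_{i=1}^h\ \sum_{H\in\mathrm{comp}(G^*_i)}\ \min_{v\in V(H)}c_i(v_0,v).$$
   Context: $\mathsf{StackMST}(\gamma,\Delta)$: given a tree $T=(V,E(T))$ with red edge costs $c(e)\ge0$, activation costs $\gamma(e)\ge0$ for every pair $e\notin E(T)$ of vertices, and a budget $\Delta$, the leader selects a set $F$ of such pairs with $\sum_{e\in F}\gamma(e)\le\Delta$ and prices $p:F\to\mathbb{R}^+$; the follower computes a minimum spanning tree $M$ of $(V,E(T)\cup F)$ (weights $c$ on red edges, $p$ on $F$), breaking ties in favor of the leader; the leader's revenue $\sum_{e\in F\cap M}p(e)$ is to be maximized. $c(T)$ is the total red cost. Root $T$ at its center $v_0$; $h$ is its height. For $1\le i\le h$, let $V_i=\{v_1,\dots,v_{\ell_i}\}$ be the vertices at depth $i$ and $E_i$ the set of edges joining vertices of $V_i$ to their parents. $T_i$ is the star centered at $v_0$ with leaves $v_1,\dots,v_{\ell_i}$, with $c_i(v_0,v)=c(u,v)$ where $u$ is the parent of $v$ in $T$; by convention $c_i(v_0,v_0)=0$. Let $\hat T_0,\hat T_1,\dots,\hat T_{\ell_i}$ be the connected components of $T-E_i$, with $v_0\in V(\hat T_0)$ and $v_j\in V(\hat T_j)$ for $j\ge1$. Let $F^*_i$ be the set of pairs $(v_j,v_q)$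 such that there is $(u,v)\in F^*$ with $u\in V(\hat T_j)$, $v\in V(\hat T_q)$, $j\ne q$, and let $G^*_i=(\{v_0,\dots,v_{\ell_i}\},F^*_i)$; $\mathrm{comp}(G^*_i)$ denotes its set of connected components. *)

From mathcomp Require Import all_boot all_order all_algebra.
Set Implicit Arguments. Unset Strict Implicit. Unset Printing Implicit Defensive.
Import Order.TTheory GRing.Theory Num.Theory.
Local Open Scope ring_scope.

Section StackMST.
Variable V : finType.

Definition is_pair (e : {set V}) : bool := #|e| == 2%N.

Definition adjE (M : {set {set V}}) : rel V := fun x y => [set x; y] \in M.

Definition spanning_tree (E M : {set {set V}}) : Prop :=
  [/\ M \subset E, {in M, forall e, is_pair e},
      (forall x y, connect (adjE M) x y) & #|M| = (#|V|).-1].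

Definition is_tree (ET : {set {set V}}) : Prop := spanning_tree [set e | is_pair e] ET.

Definition ball (M : {set {set V}}) (k : nat) (x : V) : {set V} :=
  iter k (fun S => S :|: [set y | [exists z in S, adjE M z y]]) [set x].
Definition dist (M : {set {set V}}) (x y : V) : nat :=
  find (fun k => y \in ball M k x) (iota 0 #|V|).
Definition ecc (M : {set {set V}}) (v : V) : nat := \max_(u : V) dist M v u.
Definition is_center (ET : {set {set V}}) (v0 : V) : Prop :=
  forall u, (ecc ET v0 <= ecc ET u)%N.
Definition height (ET : {set {set V}}) (v0 : V) : nat := ecc ET v0.
Definition depth (ET : {set {set V}}) (v0 v : V) : nat := dist ET v0 v.

Variable R : realFieldType.

(* follower's weights: red cost on tree edges, price on blue edges *)
Definition weight (ET : {set {set V}}) (c p : {set V} -> R) (e : {set V}) : R :=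
  if e \in ET then c e else p e.

Definition is_MST (E : {set {set V}}) (w : {set V} -> R) (M : {set {set V}}) : Prop :=
  spanning_tree E M /\
  forall M', spanning_tree E M' -> \sum_(e in M) w e <= \sum_(e in M') w e.

Definition rev_of (F : {set {set V}}) (p : {set V} -> R) (M : {set {set V}}) : R :=
  \sum_(e in F :&: M) p e.

(* follower's choice: an MST, ties broken in favour of the leader *)
Definition follower_tree (ET : {set {set V}}) (c : {set V} -> R)
    (F : {set {set V}}) (p : {set V} -> R) (M : {set {set V}}) : Prop :=
  is_MST (ET :|: F) (weight ET c p) M /\
  forall M', is_MST (ET :|: F) (weight ET c p) M' -> rev_of F p M' <= rev_of F p M.

Definition leader_revenue (ET : {set {set V}}) (c : {set V} -> R) (F : {set {set V}}) (p : {set V} -> R) (r : R) : Prop :=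
  exists M, follower_tree ET c F p M /\ r = rev_of F p M.

Definition feasible (ET : {set {set V}}) (gamma : {set V} -> R) (Delta : R)
    (F : {set {set V}}) (p : {set V} -> R) : Prop :=
  [/\ {in F, forall e, is_pair e /\ e \notin ET},
      \sum_(e in F) gamma e <= Delta & {in F, forall e, 0 <= p e}].

Definition optimal (ET : {set {set V}}) (c gamma : {set V} -> R) (Delta : R) (F : {set {set V}}) (p : {set V} -> R) (r : R) : Prop :=
  [/\ feasible ET gamma Delta F p, leader_revenue ET c F p r &
      forall F' p' r', feasible ET gamma Delta F' p' -> leader_revenue ET c F' p' r' ->
        r' <= r].

Definition level_edges (ET : {set {set V}}) (v0 : V) (i : nat) : {set {set V}} :=
  [set e in ET | [exists u in e, exists v in e,
     (depth ET v0 u == i.-1) && (depth ET v0 v == i)]].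
Definition W_i (ET : {set {set V}}) (v0 : V) (i : nat) : {set V} :=
  v0 |: [set v | depth ET v0 v == i].
Definition hatcomp (ET : {set {set V}}) (v0 : V) (i : nat) (a x : V) : bool :=
  connect (adjE (ET :\: level_edges ET v0 i)) a x.
Definition Gi_rel (ET : {set {set V}}) (v0 : V) (F : {set {set V}}) (i : nat) : rel V := fun a b =>
  [&& a \in W_i ET v0 i, b \in W_i ET v0 i, a != b &
   [exists u, exists v, [&& [set u; v] \in F, hatcomp ET v0 i a u & hatcomp ET v0 i b v]]].
Definition comps (ET : {set {set V}}) (v0 : V) (F : {set {set V}}) (i : nat) : {set {set V}} :=
  [set [set y in W_i ET v0 i | connect (Gi_rel ET v0 F i) x y] | x in W_i ET v0 i].

Definition parent (ET : {set {set V}}) (v0 : V) (v : V) : V :=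
  odflt v [pick u | ([set u; v] \in ET) && (depth ET v0 u == (depth ET v0 v).-1)].
(* c_i(v0, v) for v at depth i; c_i(v0,v0) = 0 *)
Definition ci (ET : {set {set V}}) (c : {set V} -> R) v0 (v : V) : R :=
  if v == v0 then 0 else c [set parent ET v0 v; v].

Definition minc (f : V -> R) (x0 : V) (H : {set V}) : R :=
  \big[Num.min/f (odflt x0 [pick v in H])]_(v in H) f v.

End StackMST.

From mathcomp Require Import all_boot all_order all_algebra zify.
Import Order.TTheory GRing.Theory Num.Theory.
Set Implicit Arguments. Unset Strict Implicit. Unset Printing Implicit Defensive.

(** Let [M] be the follower's tree. Since [T] is itself a spanning tree of [T + F*], the
   weight of [M] is at most [c(T)], so the revenue is at most [c(T)] minus the red cost kept
   in [M]. Every red edge is the parent edge of a unique non-root vertex [z], and has cost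
   [c_i(v0, z)] for [i] the depth of [z]. For a fixed level [i], the blue edges of [M] join
   vertices of the same component of [G*_i], and the red edges off [E_i] stay inside one
   component of [T - E_i]; hence, [M] being connected, every component [H] of [G*_i] avoiding
   [v0] contains a vertex whose parent edge is in [M], and that edge costs at least the
   minimum of [c_i] over [H]. Summing over components and levels gives the bound. *)

Section Distance.
Variables (V : finType) (M : {set {set V}}).

Lemma ballS k x y :
  (y \in ball M k.+1 x) = (y \in ball M k x) || [exists z in ball M k x, adjE M z y].
Proof. by rewrite /ball iterS -/(ball M k x) in_setU inE. Qed.

Lemma ball_mono k k' x y : (k <= k')%N -> y \in ball M k x -> y \in ball M k' x.
Proof.
move=> /subnKC <-; elim: (k' - k)%N => [|n IH]; first by rewrite addn0.
by move=> yk; rewrite addnS ballS IH.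
Qed.

Lemma last_path_in_ball x p : path (adjE M) x p -> last x p \in ball M (size p) x.
Proof.
elim/last_ind: p => [|p z IH]; first by rewrite /ball /= set11.
rewrite rcons_path last_rcons size_rcons => /andP[/IH xp pz].
by rewrite ballS; apply/orP; right; apply/existsP; exists (last x p); rewrite xp.
Qed.

Lemma connect_in_ball x y :
  connect (adjE M) x y -> exists2 k, (k < #|V|)%N & y \in ball M k x.
Proof.
case/connectP=> p xp ->; case: (shortenP xp) => p' xp' up' _.
exists (size p'); last exact: last_path_in_ball.
by have := max_card (mem (x :: p')); rewrite (card_uniqP up').
Qed.

Hypothesis M_connected : forall x y, connect (adjE M) x y.

Lemma distP x y :
  y \in ball M (dist M x y) x /\ forall k, y \in ball M k x -> (dist M x y <= k)%N.
Proof.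
have [k kV yk] := connect_in_ball (M_connected x y).
pose P k := y \in ball M k x.
have hasP : has P (iota 0 #|V|) by apply/hasP; exists k; rewrite ?mem_iota.
have := has_find P (iota 0 #|V|); rewrite hasP size_iota => /esym find_lt.
have := nth_find 0 hasP; rewrite nth_iota // add0n => y_dist.
split=> // k' yk'; case: (ltnP k' #|V|) => [k'V|]; last first.
  by move=> /(leq_trans find_lt)/ltnW.
rewrite leqNgt; apply/negP => /(before_find 0).
by rewrite nth_iota // add0n /P yk'.
Qed.

Lemma dist_eq0 x y : (dist M x y == 0%N) = (y == x).
Proof.
apply/eqP/eqP => [d0|->]; first by move: (distP x y).1; rewrite d0 /ball /= inE => /eqP.
by apply/eqP; rewrite -leqn0; apply: (distP x x).2; rewrite /ball /= set11.
Qed.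

Lemma dist_closer_neighbour x y : y != x ->
  exists z, adjE M z y && (dist M x z == (dist M x y).-1).
Proof.
move=> yx; have [y_dist dist_min] := distP x y.
move: (dist_eq0 x y); rewrite (negbTE yx).
case dy: (dist M x y) y_dist => [|k] // + _.
rewrite ballS => /orP[/dist_min|]; first by rewrite dy ltnn.
case/existsP => z /andP[zk zy]; exists z; rewrite zy /=.
have [z_dist zdist_min] := distP x z.
rewrite eqn_leq zdist_min //= leqNgt; apply/negP => zk_lt.
have : y \in ball M (dist M x z).+1 x.
  by rewrite ballS; apply/orP; right; apply/existsP; exists z; rewrite z_dist.
by move/(ball_mono zk_lt)/dist_min; rewrite dy ltnn.
Qed.

End Distance.

Definition parent_edge (V : finType) (ET : {set {set V}}) (v0 z : V) : {set V} :=
  [set parent ET v0 z; z].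

Section RootedTree.
Variables (V : finType) (ET : {set {set V}}) (v0 : V).
Hypothesis ET_connected : forall x y, connect (adjE ET) x y.

Lemma depth_eq0 y : (depth ET v0 y == 0%N) = (y == v0).
Proof. exact: dist_eq0. Qed.

Lemma parent_edgeP y : y != v0 ->
  parent_edge ET v0 y \in ET /\ depth ET v0 (parent ET v0 y) = (depth ET v0 y).-1.
Proof.
move=> yv0; rewrite /parent_edge /parent; case: pickP => [z /andP[zy /eqP dz] //|none].
by have [z zP] := dist_closer_neighbour ET_connected yv0; move: (none z); rewrite zP.
Qed.

Lemma parent_edge_in y : y != v0 -> parent_edge ET v0 y \in ET.
Proof. by case/parent_edgeP. Qed.

Lemma depth_parent y : y != v0 -> depth ET v0 (parent ET v0 y) = (depth ET v0 y).-1.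
Proof. by case/parent_edgeP. Qed.

Lemma depth_gt0 y : y != v0 -> (0 < depth ET v0 y)%N.
Proof. by rewrite lt0n depth_eq0. Qed.

Lemma parent_edge_inj : {in [set~ v0] &, injective (parent_edge ET v0)}.
Proof.
move=> z z'; rewrite !in_setC1 => zv0 z'v0 eq_pe; apply/eqP/negP => /negP zz'.
have : z \in parent_edge ET v0 z' by rewrite -eq_pe !inE eqxx orbT.
have : z' \in parent_edge ET v0 z by rewrite eq_pe !inE eqxx orbT.
rewrite !inE [z' == z]eq_sym (negbTE zz') !orbF => /eqP pz /eqP pz'.
have := depth_parent zv0; have := depth_parent z'v0; have := depth_gt0 zv0.
by rewrite -pz -pz'; lia.
Qed.

Lemma depth_iter_parent x k : (k <= depth ET v0 x)%N ->
  depth ET v0 (iter k (parent ET v0) x) = (depth ET v0 x - k)%N.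
Proof.
elim: k => [|k IH] kx; first by rewrite subn0.
have dk := IH (ltnW kx).
have kv0 : iter k (parent ET v0) x != v0 by rewrite -depth_eq0 dk; lia.
by rewrite iterS depth_parent // dk; lia.
Qed.

Section Level.
Variable i : nat.
Hypothesis i_gt0 : (0 < i)%N.

(* The vertex of [W_i] whose component of [T - E_i] contains [x]: its ancestor at depth [i],
   or [v0] when [x] is shallower than [i]. *)
Definition level_anc (x : V) : V :=
  if (i <= depth ET v0 x)%N then iter (depth ET v0 x - i) (parent ET v0) x else v0.

Lemma parent_edge_notin_level w : w != v0 -> depth ET v0 w != i ->
  parent_edge ET v0 w \notin level_edges ET v0 i.
Proof.
move=> wv0 dw; have := depth_parent wv0; have := depth_gt0 wv0.
rewrite /level_edges inE negb_and orbC => dw_gt0 dpw; apply/orP; left.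
apply/negP => /existsP[u /andP[+ /existsP[v /andP[+ /andP[/eqP du /eqP dv]]]]].
by rewrite !inE => /orP[] /eqP eu /orP[] /eqP ev; subst u v; move: dw du dv; rewrite ?dpw; lia.
Qed.

Lemma hatcomp_iter_parent x k : (k <= depth ET v0 x)%N ->
  (forall j, (j < k)%N -> (depth ET v0 x - j)%N != i) ->
  hatcomp ET v0 i (iter k (parent ET v0) x) x.
Proof.
elim: k => [|k IH] kx avoid_i; first exact: connect0.
apply: connect_trans (IH (ltnW kx) (fun j jk => avoid_i j (ltnW jk))).
have kv0 : iter k (parent ET v0) x != v0 by rewrite -depth_eq0 depth_iter_parent; lia.
have dk : depth ET v0 (iter k (parent ET v0) x) != i.
  by rewrite depth_iter_parent ?(ltnW kx) ?avoid_i.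
by apply: connect1; rewrite /adjE in_setD iterS parent_edge_notin_level ?parent_edge_in.
Qed.

Lemma hatcomp_level_anc x : hatcomp ET v0 i (level_anc x) x.
Proof.
rewrite /level_anc; case: ifP => ix.
  by apply: hatcomp_iter_parent; [exact: leq_subr | move=> j ji; apply/eqP; lia].
have root : iter (depth ET v0 x) (parent ET v0) x = v0.
  by apply/eqP; rewrite -depth_eq0 depth_iter_parent // subnn.
rewrite -[X in hatcomp _ _ _ X _]root.
by apply: hatcomp_iter_parent => // j jx; apply/eqP; move/negbT: ix; lia.
Qed.

Lemma level_anc_in_W x : level_anc x \in W_i ET v0 i.
Proof.
rewrite /level_anc /W_i; case: ifP => ix; last by rewrite setU11.
by rewrite in_setU1 inE depth_iter_parent ?leq_subr //; apply/orP; right; apply/eqP; lia.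
Qed.

Lemma level_anc_id a : a \in W_i ET v0 i -> level_anc a = a.
Proof.
rewrite /W_i in_setU1 inE => /orP[/eqP ->|/eqP da]; last by rewrite /level_anc da leqnn subnn.
by move: (depth_eq0 v0); rewrite eqxx /level_anc => /eqP ->; case: i i_gt0.
Qed.

Lemma level_anc_parent y : y != v0 -> depth ET v0 y != i ->
  level_anc (parent ET v0 y) = level_anc y.
Proof.
move=> yv0 dy; have := depth_gt0 yv0; rewrite /level_anc depth_parent // => dy_gt0.
case: (ltnP (depth ET v0 y) i) => yi; first by rewrite !ifF //; apply/negbTE; lia.
rewrite !ifT; try lia.
have -> : (depth ET v0 y - i = ((depth ET v0 y).-1 - i).+1)%N by move/eqP: dy; lia.
by rewrite iterSr.
Qed.

Lemma level_anc_parent_at_level z : z != v0 -> depth ET v0 z = i ->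
  level_anc (parent ET v0 z) = v0.
Proof. by move=> zv0 dz; rewrite /level_anc depth_parent // dz ifF //; lia. Qed.

End Level.
End RootedTree.

Lemma imset_parent_edge (V : finType) (ET : {set {set V}}) (v0 : V) :
  is_tree ET -> parent_edge ET v0 @: [set~ v0] = ET.
Proof.
case=> _ _ ET_connected card_ET; apply/eqP.
rewrite eqEcard card_in_imset ?cardsC1 ?card_ET ?leqnn ?andbT; last exact: parent_edge_inj.
by apply/subsetP => e /imsetP[z]; rewrite in_setC1 => zv0 ->; apply: parent_edge_in.
Qed.

Lemma connect_cross (T : finType) (e : rel T) (S : pred T) x y :
  connect e x y -> ~~ S x -> S y -> exists a b, [/\ e a b, ~~ S a & S b].
Proof.
case/connectP => p; elim: p x => [|z p IH] x /=; first by move=> _ -> /negbTE ->.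
case/andP => xz zp ey nSx Sy; case: (boolP (S z)) => [Sz|nSz]; first by exists x, z.
exact: IH zp ey nSz Sy.
Qed.

Section Components.
Variables (V : finType) (ET F : {set {set V}}) (v0 : V) (i : nat).

Lemma Gi_rel_sym : symmetric (Gi_rel ET v0 F i).
Proof.
move=> a b; apply/idP/idP => /and4P[aW bW ab /existsP[u /existsP[v /and3P[uv au bv]]]];
  rewrite /Gi_rel aW bW eq_sym ab; apply/existsP; exists v; apply/existsP; exists u;
  by rewrite setUC uv au bv.
Qed.

Lemma comps_sub_W H : H \in comps ET v0 F i -> H \subset W_i ET v0 i.
Proof. by case/imsetP => x _ ->; apply/subsetP => y; rewrite inE => /andP[]. Qed.

Lemma comps_eq H H' z : H \in comps ET v0 F i -> H' \in comps ET v0 F i ->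
  z \in H -> z \in H' -> H = H'.
Proof.
move=> /imsetP[x _ ->] /imsetP[x' _ ->]; rewrite !inE => /andP[_ xz] /andP[_ x'z].
have Gsym := sym_connect_sym Gi_rel_sym.
apply/setP => y; rewrite !inE; congr andb; apply/idP/idP => /(connect_trans _); apply.
  by apply: connect_trans x'z _; rewrite Gsym.
by apply: connect_trans xz _; rewrite Gsym.
Qed.

End Components.

Lemma comps_parent_edge (V : finType) (ET F M : {set {set V}}) (v0 : V) (i : nat) H :
  is_tree ET -> (forall x y, connect (adjE M) x y) -> M \subset ET :|: F -> (0 < i)%N ->
  H \in comps ET v0 F i -> v0 \notin H -> exists2 z, z \in H & parent_edge ET v0 z \in M.
Proof.
move=> ET_tree M_connected M_sub i_gt0 /imsetP[x0 x0W ->{H}].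
have [_ _ ET_connected _] := ET_tree.
set G := Gi_rel ET v0 F i.
have v0W : v0 \in W_i ET v0 i by rewrite setU11.
rewrite inE v0W /= => x0v0.
pose S x := connect G x0 (level_anc ET v0 i x).
have [a [b [ab]]] : exists a b, [/\ adjE M a b, ~~ S a & S b].
  by apply: (connect_cross (S := S) (M_connected v0 x0)); rewrite /S !level_anc_id.
rewrite /S => nSa Sb.
have anc_ab : level_anc ET v0 i a != level_anc ET v0 i b by apply: contraNneq nSa => ->.
case/setUP: (subsetP M_sub _ ab) => [abT|abF]; last first.
  case/negP: nSa; apply: connect_trans Sb (connect1 _).
  rewrite /G /Gi_rel !level_anc_in_W //= eq_sym anc_ab /=.
  by apply/existsP; exists b; apply/existsP; exists a; rewrite setUC abF !hatcomp_level_anc.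
rewrite -(imset_parent_edge v0 ET_tree) in abT.
case/imsetP: abT => z; rewrite in_setC1 => zv0 ez.
have a_pz : a \in parent_edge ET v0 z by rewrite -ez !inE eqxx.
have b_pz : b \in parent_edge ET v0 z by rewrite -ez !inE eqxx orbT.
have dz : depth ET v0 z = i.
  apply/eqP; apply: contraNT anc_ab => dz; move: a_pz b_pz.
  by rewrite !inE => /orP[]/eqP-> /orP[]/eqP->; rewrite ?level_anc_parent.
move: b_pz Sb; rewrite !inE => /orP[]/eqP->.
  by rewrite level_anc_parent_at_level // (negbTE x0v0).
have zW : z \in W_i ET v0 i by rewrite in_setU1 inE dz eqxx orbT.
by rewrite level_anc_id // => x0z; exists z; rewrite -?ez // inE zW.
Qed.

Local Open Scope ring_scope.

Lemma ler_sum_subpred (R : numDomainType) (I : finType) (P Q : pred I) (F : I -> R) :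
  (forall i, P i -> Q i) -> (forall i, Q i -> 0 <= F i) ->
  \sum_(i | P i) F i <= \sum_(i | Q i) F i.
Proof.
move=> PQ F_ge0; rewrite [X in _ <= X](bigID P) /= -[X in X <= _]addr0.
rewrite (eq_bigl P) => [|i]; last by case: (boolP (P i)) => Pi; rewrite ?andbT ?andbF ?PQ.
by rewrite lerD2l; apply: sumr_ge0 => i /andP[/F_ge0].
Qed.

Lemma sum_nat_pred1 (R : nmodType) m n k (x : R) :
  \sum_(m <= i < n | i == k) x = x *+ (m <= k < n)%N.
Proof.
rewrite big_const_seq count_uniq_mem ?iota_uniq // mem_index_iota.
by case: (m <= k < n)%N => /=; rewrite ?addr0.
Qed.

Section Costs.
Variables (R : realFieldType) (V : finType) (ET : {set {set V}}) (v0 : V) (c : {set V} -> R).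
Hypotheses (ET_tree : is_tree ET) (c_ge0 : forall e, e \in ET -> 0 <= c e).

Let ET_connected : forall x y, connect (adjE ET) x y.
Proof. by case: ET_tree. Qed.

Lemma ci_ge0 z : 0 <= ci ET c v0 z.
Proof. by rewrite /ci; case: eqP => // /eqP zv0; apply/c_ge0/parent_edge_in. Qed.

(* Components containing [v0] contribute at most [ci v0 = 0]; every other one is charged to
   one of its vertices whose parent edge lies in [M], distinct components to distinct vertices. *)
Lemma sum_minc_comps_le (F M : {set {set V}}) i :
  (forall x y, connect (adjE M) x y) -> M \subset ET :|: F -> (0 < i)%N ->
  \sum_(H in comps ET v0 F i) minc (ci ET c v0) v0 H <=
  \sum_(z | (depth ET v0 z == i) && (parent_edge ET v0 z \in M)) ci ET c v0 z.
Proof.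
move=> M_connected M_sub i_gt0.
rewrite (bigID (fun H : {set V} => v0 \in H)) /= -[X in _ <= X]add0r; apply: lerD.
  apply: sumr_le0 => H /andP[_ v0H].
  by apply: le_trans (bigmin_le_cond _ _ v0H) _; rewrite /ci eqxx.
pose rep (H : {set V}) := odflt v0 [pick z in H | parent_edge ET v0 z \in M].
have repP H : H \in comps ET v0 F i -> v0 \notin H ->
    rep H \in H /\ parent_edge ET v0 (rep H) \in M.
  move=> HC v0H; rewrite /rep; case: pickP => [z /andP[]|none] //=.
  have [z zH zM] := comps_parent_edge ET_tree M_connected M_sub i_gt0 HC v0H.
  by move: (none z); rewrite zH zM.
pose A := [set H in comps ET v0 F i | v0 \notin H].
apply: (@le_trans _ _ (\sum_(H in A) ci ET c v0 (rep H))).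
  rewrite (eq_bigl (mem A)) => [|H]; last by rewrite !inE.
  apply: ler_sum => H HA; have : H \in A := HA; rewrite inE => /andP[HC v0H].
  exact/bigmin_le_cond/(repP H HC v0H).1.
rewrite -(big_imset (h := rep) (A := mem A) (ci ET c v0)) /=; last first.
  move=> H H'; rewrite !inE => /andP[HC v0H] /andP[HC' v0H'] eq_rep.
  apply: (comps_eq HC HC' (repP H HC v0H).1); rewrite eq_rep; exact: (repP H' HC' v0H').1.
apply: ler_sum_subpred => [z /imsetP[H]|z _]; last exact: ci_ge0.
rewrite inE => /andP[HC v0H] ->; have [repH repM] := repP H HC v0H.
have := subsetP (comps_sub_W HC) _ repH; rewrite repM andbT in_setU1 inE.
by case/orP => [/eqP rep_v0|//]; move: v0H; rewrite -rep_v0 repH.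
Qed.

Lemma sum_levels_le (M : {set {set V}}) h :
  \sum_(1 <= i < h.+1)
     \sum_(z | (depth ET v0 z == i) && (parent_edge ET v0 z \in M)) ci ET c v0 z <=
  \sum_(z | (z != v0) && (parent_edge ET v0 z \in M)) ci ET c v0 z.
Proof.
under eq_bigr do rewrite big_mkcond.
rewrite exchange_big /= [X in _ <= X]big_mkcond; apply: ler_sum => z _.
case: (parent_edge ET v0 z \in M); rewrite ?andbT ?andbF; last by rewrite big1 // => i _; rewrite andbF.
rewrite -big_mkcond /= (eq_bigl (fun i => i == depth ET v0 z)) => [|i]; last by rewrite andbT eq_sym.
rewrite sum_nat_pred1; case: (eqVneq z v0) => [->|zv0] /=.
  by move: (@depth_eq0 _ ET v0 ET_connected v0); rewrite eqxx => /eqP ->.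
by case: (_ && _); rewrite ?mulr1n ?ci_ge0.
Qed.

Lemma sum_ci_le_cost (M : {set {set V}}) :
  \sum_(z | (z != v0) && (parent_edge ET v0 z \in M)) ci ET c v0 z <=
  \sum_(e in M | e \in ET) c e.
Proof.
pose Z := [set z | (z != v0) && (parent_edge ET v0 z \in M)].
rewrite (eq_bigl (mem Z)) => [|z]; last by rewrite !inE.
rewrite (eq_bigr (c \o parent_edge ET v0)) => [|z zZ]; last first.
  by have : z \in Z := zZ; rewrite inE /ci => /andP[/negbTE ->].
rewrite -(big_imset (h := parent_edge ET v0) (A := mem Z) c) /=; last first.
  by move=> z z'; rewrite !inE => /andP[zv0 _] /andP[z'v0 _]; apply: (parent_edge_inj ET_connected); rewrite in_setC1.
apply: ler_sum_subpred => [e /imsetP[z]|e /andP[_ /c_ge0]//].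
by rewrite inE => /andP[zv0 zM] ->; rewrite zM parent_edge_in.
Qed.

Lemma sum_comps_le_cost (F M : {set {set V}}) h :
  (forall x y, connect (adjE M) x y) -> M \subset ET :|: F ->
  \sum_(1 <= i < h.+1) \sum_(H in comps ET v0 F i) minc (ci ET c v0) v0 H <=
  \sum_(e in M | e \in ET) c e.
Proof.
move=> M_connected M_sub; apply: le_trans (sum_ci_le_cost M).
apply: le_trans (sum_levels_le M h); apply: ler_sum_nat => i /andP[i_gt0 _].
exact: sum_minc_comps_le.
Qed.

End Costs.

(* [T] itself is a spanning tree of [T + F], hence not lighter than [M]. *)
Lemma MST_revenue_le (R : realFieldType) (V : finType) (ET F M : {set {set V}})
    (c p : {set V} -> R) :
  is_tree ET -> {in F, forall e, e \notin ET} -> is_MST (ET :|: F) (weight ET c p) M ->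
  rev_of F p M + \sum_(e in M | e \in ET) c e <= \sum_(e in ET) c e.
Proof.
move=> ET_tree F_blue [[M_sub _ _ _] M_min].
have ET_span : spanning_tree (ET :|: F) ET by case: ET_tree => *; split=> //; exact: subsetUl.
have cost_eq : \sum_(e in ET) c e = \sum_(e in ET) weight ET c p e.
  by apply: eq_bigr => e eET; rewrite /weight eET.
have red_eq : \sum_(e in M | e \in ET) c e = \sum_(e in M | e \in ET) weight ET c p e.
  by apply: eq_bigr => e /andP[_ eET]; rewrite /weight eET.
have rev_eq : rev_of F p M = \sum_(e in M | e \notin ET) weight ET c p e.
  apply: eq_big => [e|e]; last by rewrite inE => /andP[/F_blue eET _]; rewrite /weight (negbTE eET).
  rewrite inE andbC; case: (boolP (e \in M)) => //= eM.
  have [eF|eF] := boolP (e \in F); first by rewrite F_blue.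
  by case/setUP: (subsetP M_sub e eM) => [->|]; rewrite ?(negbTE eF).
by rewrite cost_eq red_eq rev_eq addrC -bigID; exact: M_min.
Qed.

Theorem lemma6 (R : realFieldType) (V : finType) (ET : {set {set V}})
    (c gamma : {set V} -> R) (Delta : R) (v0 : V)
    (Fs : {set {set V}}) (ps : {set V} -> R) (r : R) :
  is_tree ET ->
  (forall e, e \in ET -> 0 <= c e) ->
  (forall e, is_pair e -> e \notin ET -> 0 <= gamma e) ->
  is_center ET v0 ->
  optimal ET c gamma Delta Fs ps r ->
  r <= \sum_(e in ET) c e
       - \sum_(1 <= i < (height ET v0).+1)
           \sum_(H in comps ET v0 Fs i) minc (ci ET c v0) v0 H.
Proof.
move=> ET_tree c_ge0 _ _ [[Fs_ok _ _] [M [[M_mst _] ->]] _].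
have [[M_sub _ M_connected _] _] := M_mst.
have Fs_blue : {in Fs, forall e, e \notin ET} by move=> e /Fs_ok[].
rewrite lerBrDr; apply: le_trans (MST_revenue_le ET_tree Fs_blue M_mst).
by rewrite lerD2l; apply: sum_comps_le_cost.
Qed.
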